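(* Let $m\ge 2$, $d_1,\dots,d_m\ge 2$, and let $\rho$ be a density matrix on $\mathbb{C}^{d_1}\otimes\cdots\otimes\mathbb{C}^{d_m}$. For each $i=1,\dots,m$ let $\mathcal{P}^{(i)}=\{P^{(i)}_j\}_{j=1}^{d_i^2}$ be a general SIC-POVM on $\mathbb{C}^{d_i}$ with parameter $a_i$. Let $d=\min\{d_1^2,\dots,d_m^2\}$ and define $$J(\rho)=\max_{\sigma_1,\dots,\sigma_m}\sum_{j=1}^{d}\mathrm{Tr}\Big[\Big(\bigotimes_{i=1}^m P^{(i)}_{\sigma_i(j)}\Big)\rho\Big],$$ where the maximum runs over all tuples of injective maps $\sigma_i:\{1,\dots,d\}\to\{1,\dots,d_i^2\}$, $i=1,\dots,m$. If $\rho$ is fully separable, then $$J(\rho)\le \frac1m\sum_{i=1}^m\frac{a_id_i^2+1}{d_i(d_i+1)}.$$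
   Context: A general SIC-POVM on $\mathbb{C}^{n}$ with parameter $a$ is a set of $n^2$ positive semidefinite operators $\{P_\alpha\}_{\alpha=1}^{n^2}$ on $\mathbb{C}^{n}$ such that $\sum_{\alpha=1}^{n^2}P_\alpha=I$, $\mathrm{Tr}(P_\alpha^2)=a$ for all $\alpha$, and $\mathrm{Tr}(P_\alpha P_\beta)=\frac{1-na}{n(n^2-1)}$ for all $\alpha\neq\beta$; here $\frac{1}{n^3}<a\le\frac{1}{n^2}$. A density matrix on $\mathbb{C}^{d_1}\otimes\cdots\otimes\mathbb{C}^{d_m}$ is fully separable if it is a convex combination of product states $\rho_1\otimes\cdots\otimes\rho_m$. *)

(* The complex field is modelled by an arbitrary
   numClosedFieldType C (e.g. algC); operators on a finite-dimensional Hilbert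
   space with orthonormal basis indexed by a finType T are functions T -> T -> C. *)
From HB Require Import structures.
From mathcomp Require Import all_boot all_order all_algebra all_field.
Set Implicit Arguments. Unset Strict Implicit. Unset Printing Implicit Defensive.
Import Order.TTheory GRing.Theory Num.Theory.
Local Open Scope ring_scope.

Definition op (C : numClosedFieldType) (T : finType) := T -> T -> C.

Definition tr (C : numClosedFieldType) (T : finType) (A : op C T) : C := \sum_(x : T) A x x.

Definition mulop (C : numClosedFieldType) (T : finType) (A B : op C T) : op C T :=
  fun x y => \sum_(z : T) A x z * B z y.

Definition psd (C : numClosedFieldType) (T : finType) (A : op C T) : Prop :=
  forall v : T -> C, 0 <= \sum_(x : T) \sum_(y : T) (v x)^* * A x y * v y.

Definition density (C : numClosedFieldType) (T : finType) (A : op C T) : Prop := psd A /\ tr A = 1.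

Definition gen_sic (C : numClosedFieldType) (n : nat) (a : C) (P : 'I_(n ^ 2) -> op C 'I_n) : Prop :=
  [/\ forall al, psd (P al),
      forall x y : 'I_n, \sum_(al < n ^ 2) P al x y = (x == y)%:R,
      forall al, tr (mulop (P al) (P al)) = a,
      forall al be, al != be ->
        tr (mulop (P al) (P be)) = (1 - n%:R * a) / (n%:R * ((n ^ 2)%N%:R - 1)) &
      ((n ^ 3)%N%:R)^-1 < a /\ a <= ((n ^ 2)%N%:R)^-1].

(* index type of the multipartite space C^{d_0} (x) ... (x) C^{d_{m-1}} *)
Definition mindex (m : nat) (d : 'I_m -> nat) : finType :=
  {dffun forall i : 'I_m, 'I_(d i)}.

Definition tensor (C : numClosedFieldType) (m : nat) (d : 'I_m -> nat) (A : forall i : 'I_m, op C 'I_(d i))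
  : op C (mindex d) :=
  fun x y => \prod_(i < m) A i (x i) (y i).

Definition fully_separable (C : numClosedFieldType) (m : nat) (d : 'I_m -> nat) (rho : op C (mindex d)) : Prop :=
  exists (K : nat) (p : 'I_K -> C) (r : 'I_K -> forall i : 'I_m, op C 'I_(d i)),
    [/\ forall k, 0 <= p k,
        \sum_(k < K) p k = 1,
        forall k i, density (r k i) &
        forall x y, rho x y = \sum_(k < K) p k * tensor (r k) x y].

(* d = min_i d_i^2  (the initial value \max_i d_i^2 makes this the minimum for m >= 1) *)
Definition dmin (m : nat) (d : 'I_m -> nat) : nat :=
  \big[minn/(\max_(i < m) (d i ^ 2))%N]_(i < m) (d i ^ 2)%N.

(* A separable state is a convex combination of product states and the bound
   is affine in ρ, so it suffices to treat ρ = ρ_1 ⊗ ... ⊗ ρ_m.  Then each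
   summand factors as ∏_i t_i with t_i = Tr[P_i ρ_i] ∈ [0, 1], and for m ≥ 2
   AM-GM gives ∏_i t_i ≤ (1/m) Σ_i t_i^2.  Enlarging each injectively indexed
   sum to the whole POVM reduces the claim to the single-party bound
   Σ_α Tr[P_α ρ]^2 ≤ (a n^2 + 1)/(n(n+1)).  That bound follows from Tr ρ^2 ≤ 1
   and the nonnegativity of the Hilbert–Schmidt norm of Y - c ρ - e I, where
   Y = Σ_α Tr[P_α ρ] P_α and c = a - b > 0 is the gap between the diagonal
   and off-diagonal entries a, b of the Gram matrix Tr[P_α P_β]. *)
From HB Require Import structures.
From mathcomp Require Import all_boot all_order all_algebra all_field ring zify.
Set Implicit Arguments. Unset Strict Implicit. Unset Printing Implicit Defensive.
Import Order.TTheory GRing.Theory Num.Theory.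
Local Open Scope ring_scope.

Lemma sum_prod_mindex (R : comNzRingType) (m : nat) (d : 'I_m -> nat)
    (f : forall i : 'I_m, 'I_(d i) -> R) :
  \sum_(x : mindex d) \prod_(i < m) f i (x i) = \prod_(i < m) \sum_(y : 'I_(d i)) f i y.
Proof.
pose F i := [ffun y : 'I_(d i) => f i y].
rewrite (reindex (@dffun_of_fprod _ (fun i => 'I_(d i)))); last first.
  by apply/onW_bij/dffun_of_fprod_bij.
transitivity (\sum_(t : fprod (fun i => 'I_(d i))) \prod_(i in 'I_m) F i (t i)).
  by apply: eq_bigr => t _; apply: eq_bigr => i _; rewrite /F !ffunE.
rewrite big_fprod -[LHS](bigA_distr_big_dep _ (fun i j => untag 0 (F i) j)).
apply: eq_bigr => i _; rewrite -(big_tag (fun i => fun_of_fin (F i))) /=.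
by apply: eq_bigr => y _; rewrite /F ffunE.
Qed.

Lemma hermitian_spectral (C : numClosedFieldType) n (A : op C 'I_n) :
  (forall x y, A y x = (A x y)^*) ->
  exists (D : 'I_n -> C) (U : 'I_n -> 'I_n -> C),
    (forall x y, A x y = \sum_k (U k x)^* * D k * U k y) /\
    (forall k l, \sum_y U k y * (U l y)^* = (k == l)%:R).
Proof.
move=> A_herm; pose M := \matrix_(i, j) A i j.
have M_herm : M \is hermsymmx.
  by apply/is_hermitianmxP/matrixP => i j; rewrite !mxE expr0 mul1r -A_herm.
have /orthomx_spectralP defM := hermitian_normalmx M_herm.
have U_unitary : spectralmx M \is unitarymx by exact: spectral_unitarymx.
rewrite invmx_unitary // in defM.
exists (fun k => spectral_diag M 0 k), (fun k y => spectralmx M k y); split.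
- move=> x y; have /matrixP/(_ x y) := defM; rewrite mxE => ->.
  by rewrite mxE; apply: eq_bigr => k _; rewrite mul_mx_diag !mxE.
- move=> k l; have /matrixP/(_ k l) := unitarymxP U_unitary; rewrite !mxE => <-.
  by apply: eq_bigr => y _; rewrite !mxE.
Qed.

Lemma prod_le_mean_sqr (R : numFieldType) (m : nat) (u : 'I_m -> R) : (2 <= m)%N ->
  (forall i, 0 <= u i) -> (forall i, u i <= 1) ->
  \prod_i u i <= m%:R^-1 * \sum_i u i ^+ 2.
Proof.
move=> m_ge2 u_ge0 u_le1.
have m_gt0 : 0 < m%:R :> R by rewrite ltr0n; apply: leq_trans m_ge2.
set mu := m%:R^-1 * \sum_i u i ^+ 2.
have [AGM _] := @leif_AGM _ _ predT _ (fun i _ => exprn_ge0 2 (u_ge0 i)).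
rewrite card_ord prodrXl mulrC -/mu in AGM.
have mu_ge0 : 0 <= mu.
  by rewrite mulr_ge0 ?invr_ge0 ?ler0n // sumr_ge0 // => i _; apply: exprn_ge0.
have mu_le1 : mu <= 1.
  rewrite -[X in _ <= X](mulVf (lt0r_neq0 m_gt0)) ler_wpM2l ?invr_ge0 ?ler0n //.
  rewrite -[m in m%:R](card_ord m) -sumr_const.
  by apply: ler_sum => i _; rewrite exprn_ile1.
have mu_m_le2 : mu ^+ m <= mu ^+ 2.
  by rewrite -(subnK m_ge2) exprD ler_piMl ?exprn_ge0 ?exprn_ile1.
by rewrite -(ler_pXn2r (n := 2)) ?nnegrE ?prodr_ge0 // (le_trans AGM).
Qed.

Lemma sum_inj_le (R : numDomainType) (I J : finType) (s : I -> J) (f : J -> R) :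
  injective s -> (forall j, 0 <= f j) -> \sum_i f (s i) <= \sum_j f j.
Proof.
move=> s_inj f_ge0; rewrite -(big_imset _ (in2W s_inj)) /=.
by rewrite [X in _ <= X](bigID [in s @: I]) /= lerDl sumr_ge0.
Qed.

Section Operators.
Variable C : numClosedFieldType.

Definition qf (T : finType) (A : op C T) (v : T -> C) : C :=
  \sum_(x : T) \sum_(y : T) (v x)^* * A x y * v y.

Definition hs (T : finType) (A B : op C T) : C := tr (mulop A B).

Definition idop (T : finType) : op C T := fun x z => (x == z)%:R.

Lemma sum_mulr_delta (T : finType) (F : T -> C) x : \sum_w F w * (w == x)%:R = F x.
Proof.
rewrite (bigD1 x) //= eqxx mulr1 big1 ?addr0 // => w /negbTE ->.
by rewrite mulr0.
Qed.

Lemma sum_delta_mulr (T : finType) (F : T -> C) x : \sum_w (w == x)%:R * F w = F x.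
Proof. by rewrite -[RHS](sum_mulr_delta F x); apply: eq_bigr => w _; rewrite mulrC. Qed.

Lemma hsE (T : finType) (A B : op C T) : hs A B = \sum_x \sum_z A x z * B z x.
Proof. by []. Qed.

Lemma hsC (T : finType) (A B : op C T) : hs A B = hs B A.
Proof.
rewrite !hsE exchange_big /=; apply: eq_bigr => x _; apply: eq_bigr => z _.
exact: mulrC.
Qed.

Lemma eq_hsr (T : finType) (A B B' : op C T) :
  (forall x z, B x z = B' x z) -> hs A B = hs A B'.
Proof. by move=> eqB; rewrite !hsE; do 2!apply: eq_bigr => ? _; rewrite eqB. Qed.

Lemma hsBl (T : finType) (V W X : op C T) c :
  hs (fun x z => V x z - c * W x z) X = hs V X - c * hs W X.
Proof.
rewrite !hsE big_distrr -sumrB; apply: eq_bigr => x _.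
by rewrite big_distrr -sumrB; apply: eq_bigr => z _ /=; ring.
Qed.

Lemma hsBr (T : finType) (V W X : op C T) c :
  hs X (fun x z => V x z - c * W x z) = hs X V - c * hs X W.
Proof. by rewrite hsC hsBl ![hs _ X]hsC. Qed.

Lemma hs_suml (T J : finType) (t : J -> C) (Q : J -> op C T) X :
  hs (fun x z => \sum_j t j * Q j x z) X = \sum_j t j * hs (Q j) X.
Proof.
rewrite hsE; under eq_bigr do under eq_bigr do rewrite big_distrl.
under eq_bigr do rewrite exchange_big /=.
rewrite exchange_big /=; apply: eq_bigr => j _; rewrite hsE mulr_sumr.
by apply: eq_bigr => x _; rewrite mulr_sumr; apply: eq_bigr => z _; rewrite mulrA.
Qed.

Lemma hs_idr (T : finType) (X : op C T) : hs X (@idop T) = tr X.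
Proof.
rewrite hsE; apply: eq_bigr => x _.
by rewrite -[RHS](sum_mulr_delta (X x) x); apply: eq_bigr => z _; rewrite /idop eq_sym.
Qed.

Lemma tr_idop n : tr (@idop 'I_n) = n%:R.
Proof.
rewrite /tr /idop (eq_bigr (fun _ => 1)) => [|x _]; last by rewrite eqxx.
by rewrite sumr_const card_ord.
Qed.

Lemma hs_hermitian_ge0 (T : finType) (Z : op C T) :
  (forall x z, Z z x = (Z x z)^*) -> 0 <= hs Z Z.
Proof.
move=> Z_herm; apply: sumr_ge0 => x _; apply: sumr_ge0 => z _.
by rewrite (Z_herm x z) mul_conjC_ge0.
Qed.

Lemma qf_basis2 (T : finType) (A : op C T) x y al be :
  qf A (fun u => al * (u == x)%:R + be * (u == y)%:R) =
  al^* * (al * A x x + be * A x y) + be^* * (al * A y x + be * A y y).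
Proof.
rewrite /qf.
transitivity (\sum_u (al^* * (u == x)%:R + be^* * (u == y)%:R) * (al * A u x + be * A u y)).
  apply: eq_bigr => u _; rewrite rmorphD !rmorphM /= !conjC_nat.
  under eq_bigr do rewrite -mulrA.
  rewrite -big_distrr /=; congr (_ * _).
  under eq_bigr do rewrite mulrDr mulrCA [X in _ + X]mulrCA.
  by rewrite big_split /= -!big_distrr /= !sum_mulr_delta.
under eq_bigr do rewrite mulrDl -!mulrA.
by rewrite big_split /= -!big_distrr /= !sum_delta_mulr.
Qed.

Lemma psd_diag_ge0 (T : finType) (A : op C T) x : psd A -> 0 <= A x x.
Proof.
move=> A_psd.
have : 0 <= qf A (fun u => 1 * (u == x)%:R + 0 * (u == x)%:R) := A_psd _.
by rewrite qf_basis2 rmorph1 rmorph0 !mul0r !mul1r !addr0.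
Qed.

(* Testing psd on e_x + e_y and e_x + i e_y forces the off-diagonal entries
   to be conjugate. *)
Lemma psd_hermitian (T : finType) (A : op C T) x y : psd A -> A y x = (A x y)^*.
Proof.
move=> A_psd.
have /geC0_conj q1 : 0 <= qf A (fun u => 1 * (u == x)%:R + 1 * (u == y)%:R) := A_psd _.
have /geC0_conj q2 : 0 <= qf A (fun u => 1 * (u == x)%:R + 'i * (u == y)%:R) := A_psd _.
move: q1 q2; rewrite !qf_basis2 !rmorph1 !mul1r conjCi.
rewrite !(rmorphD, rmorphM, rmorphN) /= conjCi opprK.
rewrite (geC0_conj (psd_diag_ge0 x A_psd)) (geC0_conj (psd_diag_ge0 y A_psd)).
set u := A x y; set w := A y x => /eqP; rewrite -subr_eq0 => /eqP q1 /eqP.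
rewrite -subr_eq0 => /eqP q2.
have : (w - u^*) * (2 * 'i) = 0.
  rewrite -[X in _ = X](subr0 0) -[X in _ = X - _]q2.
  by rewrite -[X in _ = _ - X](mulr0 'i) -[X in _ = _ - _ * X]q1; ring.
by move/eqP; rewrite !mulf_eq0 (negbTE (neq0Ci C)) pnatr_eq0 !orbF subr_eq0 => /eqP.
Qed.

Section Spectral.
Variables (n : nat) (A : op C 'I_n) (D : 'I_n -> C) (U : 'I_n -> 'I_n -> C).
Hypothesis defA : forall x y, A x y = \sum_k (U k x)^* * D k * U k y.

Lemma hs_spectral (B : op C 'I_n) : hs A B = \sum_k D k * qf B (fun y => (U k y)^*).
Proof.
rewrite /hs /tr /mulop /qf.
transitivity (\sum_x \sum_z \sum_k D k * ((U k z) * B z x * (U k x)^*)).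
  apply: eq_bigr => x _; apply: eq_bigr => z _.
  by rewrite defA big_distrl /=; apply: eq_bigr => k _; ring.
rewrite exchange_big /=; under eq_bigr do rewrite exchange_big /=.
rewrite exchange_big /=; apply: eq_bigr => k _.
rewrite big_distrr /=; apply: eq_bigr => z _.
by rewrite big_distrr /=; apply: eq_bigr => x _; rewrite conjCK; ring.
Qed.

Hypothesis U_orthonormal : forall k l, \sum_y U k y * (U l y)^* = (k == l)%:R.

Lemma qf_spectral k : qf A (fun y => (U k y)^*) = D k.
Proof.
rewrite /qf.
transitivity (\sum_x \sum_y \sum_j D j * ((U j y * (U k y)^*) * (U k x * (U j x)^*))).
  apply: eq_bigr => x _; apply: eq_bigr => y _.
  by rewrite defA conjCK big_distrr big_distrl /=; apply: eq_bigr => j _; ring.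
rewrite exchange_big /=; under eq_bigr do rewrite exchange_big /=.
rewrite exchange_big /=.
transitivity (\sum_j D j * ((\sum_y U j y * (U k y)^*) * (\sum_x U k x * (U j x)^*))).
  apply: eq_bigr => j _; rewrite big_distrl big_distrr; apply: eq_bigr => y _.
  by rewrite !big_distrr; apply: eq_bigr => x _.
under eq_bigr do rewrite !U_orthonormal.
rewrite (bigD1 k) //= eqxx !mulr1 big1 ?addr0 // => j /negbTE.
by rewrite eq_sym => ->; rewrite !(mulr0, mul0r).
Qed.

Lemma tr_spectral : tr A = \sum_k D k.
Proof.
rewrite /tr; under eq_bigr do rewrite defA.
rewrite exchange_big /=; apply: eq_bigr => k _.
have Uk1 : \sum_y U k y * (U k y)^* = 1 by rewrite U_orthonormal eqxx.
rewrite -[RHS]mulr1 -Uk1 big_distrr /=.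
by apply: eq_bigr => y _; ring.
Qed.

End Spectral.

Lemma psd_spectral n (A : op C 'I_n) : psd A ->
  exists (D : 'I_n -> C) (U : 'I_n -> 'I_n -> C),
  [/\ forall x y, A x y = \sum_k (U k x)^* * D k * U k y,
      forall k l, \sum_y U k y * (U l y)^* = (k == l)%:R &
      forall k, 0 <= D k].
Proof.
move=> A_psd; have [D [U [defA U_on]]] := hermitian_spectral (fun x y => psd_hermitian x y A_psd).
by exists D, U; split=> // k; rewrite -(qf_spectral defA U_on); apply: A_psd.
Qed.

Lemma hs_psd_ge0 n (A B : op C 'I_n) : psd A -> psd B -> 0 <= hs A B.
Proof.
move=> /psd_spectral[D [U [defA _ D_ge0]]] B_psd.
rewrite (hs_spectral defA); apply: sumr_ge0 => k _; apply: mulr_ge0 => //.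
exact: B_psd.
Qed.

(* The eigenvalues of a density matrix lie in [0, 1] and sum to 1. *)
Lemma density_purity_le1 n (r : op C 'I_n) : density r -> hs r r <= 1.
Proof.
move=> [/psd_spectral[D [U [defr U_on D_ge0]]] tr_r].
have sumD : \sum_k D k = 1 by rewrite -(tr_spectral defr U_on).
rewrite (hs_spectral defr) -sumD; apply: ler_sum => k _.
rewrite (qf_spectral defr U_on) -[X in _ <= X]mulr1 ler_wpM2l //.
by rewrite -sumD (bigD1 k) //= lerDl sumr_ge0.
Qed.

Lemma povm_hs_sum n N (P : 'I_N -> op C 'I_n) (r : op C 'I_n) :
  (forall x y, \sum_al P al x y = (x == y)%:R) ->
  \sum_al hs (P al) r = tr r.
Proof.
move=> P_complete; rewrite -hs_idr.
rewrite (@eq_hsr _ r _ (fun x z => \sum_al 1 * P al x z)) => [|x z].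
  by rewrite hsC hs_suml; apply: eq_bigr => al _; rewrite mul1r.
by rewrite /idop -P_complete; apply: eq_bigr => al _; rewrite mul1r.
Qed.

Lemma hs_tensor (m : nat) (d : 'I_m -> nat) (A R : forall i : 'I_m, op C 'I_(d i)) :
  hs (tensor A) (tensor R) = \prod_i hs (A i) (R i).
Proof.
rewrite /hs /tr /mulop /tensor.
transitivity (\sum_(x : mindex d) \prod_i \sum_(y : 'I_(d i)) A i (x i) y * R i y (x i)).
  apply: eq_bigr => x _; rewrite -sum_prod_mindex; apply: eq_bigr => z _.
  by rewrite -big_split.
exact: (sum_prod_mindex (fun i u => \sum_(y : 'I_(d i)) A i u y * R i y u)).
Qed.

Section GeneralSIC.
Variables (n : nat) (a : C) (P : 'I_(n ^ 2) -> op C 'I_n).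
Hypotheses (n_ge2 : (2 <= n)%N) (P_sic : gen_sic a P).

Let b : C := (1 - n%:R * a) / (n%:R * (n%:R ^+ 2 - 1)).

Let n_neq0 : n%:R != 0 :> C.
Proof. by rewrite pnatr_eq0; case: n n_ge2. Qed.

Let n1_neq0 : n%:R + 1 != 0 :> C.
Proof. by rewrite natr1 pnatr_eq0. Qed.

Let nsq1_neq0 : n%:R ^+ 2 - 1 != 0 :> C.
Proof. by rewrite -natrX subr_eq0 -(mulr1n 1) eqr_nat; nia. Qed.

Lemma sic_gram_sum (s : 'I_(n ^ 2) -> C) al :
  \sum_be s be * hs (P al) (P be) = (a - b) * s al + b * \sum_be s be.
Proof.
have [_ _ P_sq P_offdiag _] := P_sic.
rewrite (bigD1 al) //= [X in _ = _ + b * X](bigD1 al) //= [hs _ _]P_sq.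
rewrite (eq_bigr (fun be => s be * b)) => [|be be_al]; last first.
  by rewrite [hs _ _]P_offdiag 1?eq_sym // natrX.
by rewrite -big_distrl /=; ring.
Qed.

Lemma tr_sic al : tr (P al) = n%:R^-1.
Proof.
have [_ P_complete _ _ _] := P_sic.
rewrite -(povm_hs_sum (P al) P_complete); under eq_bigr do rewrite hsC -[hs _ _]mul1r.
rewrite sic_gram_sum sumr_const card_ord natrX /b; field.
by rewrite n_neq0 nsq1_neq0.
Qed.

(* a - b = (a - n^-3) n^3 / (n (n^2 - 1)), and a > n^-3. *)
Lemma sic_gap_gt0 : 0 < a - b.
Proof.
have [_ _ _ _ [a_gt _]] := P_sic.
have -> : a - b = (a - (n%:R ^+ 3)^-1) * (n%:R ^+ 3 / (n%:R * (n%:R ^+ 2 - 1))).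
  by rewrite /b; field; rewrite n_neq0 nsq1_neq0.
have n_gt0 : 0 < n%:R :> C by rewrite ltr0n; case: n n_ge2.
have nsq_gt1 : 1 < n%:R ^+ 2 :> C by rewrite -natrX ltr1n; nia.
rewrite natrX in a_gt.
by rewrite mulr_gt0 ?divr_gt0 ?mulr_gt0 ?exprn_gt0 ?subr_gt0.
Qed.

Section SICState.
Variable r : op C 'I_n.
Hypothesis r_dens : density r.

Let t al := hs (P al) r.
Let Y : op C 'I_n := fun x z => \sum_al t al * P al x z.

Lemma sic_prob_sum : \sum_al t al = 1.
Proof. by have [_ P_complete _ _ _] := P_sic; rewrite povm_hs_sum //; case: r_dens. Qed.

Lemma hsY_sic be : hs Y (P be) = (a - b) * t be + b.
Proof.
rewrite hs_suml; under eq_bigr do rewrite hsC.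
by rewrite (sic_gram_sum t) sic_prob_sum mulr1.
Qed.

Lemma hsY_state : hs Y r = \sum_al t al ^+ 2.
Proof. by rewrite hs_suml; apply: eq_bigr => al _; rewrite expr2. Qed.

Lemma hsYY : hs Y Y = (a - b) * \sum_al t al ^+ 2 + b.
Proof.
rewrite {1}/Y hs_suml; under eq_bigr do rewrite hsC hsY_sic mulrDr mulrCA -expr2.
by rewrite big_split /= -mulr_sumr -mulr_suml sic_prob_sum mul1r.
Qed.

Lemma hsY_id : hs Y (@idop _) = n%:R^-1.
Proof.
rewrite hs_suml; under eq_bigr do rewrite hs_idr tr_sic.
by rewrite -mulr_suml sic_prob_sum mul1r.
Qed.

Lemma Y_hermitian x z : Y z x = (Y x z)^*.
Proof.
have [P_psd _ _ _ _] := P_sic; have [r_psd _] := r_dens.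
rewrite rmorph_sum; apply: eq_bigr => al _.
rewrite (psd_hermitian x z (P_psd al)) rmorphM /= [(t al)^*]geC0_conj //.
exact: hs_psd_ge0.
Qed.

Lemma sic_sq_sum_le :
  \sum_al hs (P al) r ^+ 2 <= (a * (n ^ 2)%N%:R + 1) / (n%:R * (n%:R + 1)).
Proof.
have [r_psd r_tr1] := r_dens.
have [c c_gt0 def_c] : exists2 c : C, 0 < c & a - b = c by exists (a - b); first exact: sic_gap_gt0.
have c_real : c \is Num.real := gtr0_real c_gt0.
(* e makes Z traceless. *)
have [e e_conj def_e] : exists2 e : C, e^* = e & e = (1 - n%:R * c) / n%:R ^+ 2.
  by exists ((1 - n%:R * c) / n%:R ^+ 2) => //; apply: conj_Creal;
    rewrite ?(rpredM, rpredB, rpredV, rpredX, rpred1, realn).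
pose Z : op C 'I_n := fun x z => Y x z - c * r x z - e * idop x z.
have Z_herm x z : Z z x = (Z x z)^*.
  rewrite /Z !rmorphB !rmorphM /= (conj_Creal c_real) e_conj /idop conjC_nat eq_sym.
  by rewrite (psd_hermitian x z r_psd) -Y_hermitian.
have := hs_hermitian_ge0 Z_herm.
rewrite /Z hsBl hsBl !hsBr [hs r Y]hsC [hs (@idop _) Y]hsC [hs (@idop _) r]hsC.
rewrite hsY_state hsYY hsY_id hs_idr r_tr1 hs_idr tr_idop def_c.
have def_b : b = (1 - n%:R * c) / n%:R ^+ 3.
  by rewrite -def_c /b; field; rewrite n_neq0 nsq1_neq0.
rewrite def_b def_e; set N := (X in 0 <= X) => N_ge0.
have purity := density_purity_le1 r_dens.
rewrite -subr_ge0 -[a](subrK b) def_c def_b natrX.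
rewrite (_ : _ - _ = N / c + c * (1 - hs r r)); last first.
  by rewrite /N; field; rewrite n_neq0 n1_neq0 gt_eqF.
apply: addr_ge0; first exact: divr_ge0 N_ge0 (ltW c_gt0).
by apply: mulr_ge0; [exact: ltW | rewrite subr_ge0].
Qed.

End SICState.

End GeneralSIC.

Lemma hs_tensor_separable (m : nat) (d : 'I_m -> nat) (A : forall i : 'I_m, op C 'I_(d i))
    (K : nat) (p : 'I_K -> C) (r : 'I_K -> forall i : 'I_m, op C 'I_(d i))
    (rho : op C (mindex d)) :
  (forall x y, rho x y = \sum_k p k * tensor (r k) x y) ->
  hs (tensor A) rho = \sum_k p k * \prod_i hs (A i) (r k i).
Proof.
move=> def_rho; rewrite (eq_hsr _ def_rho) hsC hs_suml.
by apply: eq_bigr => k _; rewrite hsC hs_tensor.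
Qed.

Lemma sic_product_state_le (m : nat) (d : 'I_m -> nat) (a : 'I_m -> C)
    (P : forall i : 'I_m, 'I_(d i ^ 2) -> op C 'I_(d i)) (D : nat)
    (sigma : forall i : 'I_m, 'I_D -> 'I_(d i ^ 2)) (r : forall i : 'I_m, op C 'I_(d i)) :
  (2 <= m)%N -> (forall i, (2 <= d i)%N) -> (forall i, gen_sic (a i) (P i)) ->
  (forall i, injective (sigma i)) -> (forall i, density (r i)) ->
  \sum_(j < D) \prod_i hs (P i (sigma i j)) (r i)
    <= m%:R^-1 * \sum_i (a i * (d i ^ 2)%N%:R + 1) / ((d i)%:R * ((d i)%:R + 1)).
Proof.
move=> m_ge2 d_ge2 P_sic sigma_inj r_dens.
pose t i al := hs (P i al) (r i).
have t_ge0 i al : 0 <= t i al.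
  by apply: hs_psd_ge0; [case: (P_sic i) | case: (r_dens i)].
have t_le1 i al : t i al <= 1.
  have [_ P_complete _ _ _] := P_sic i; have [_ tr_r] := r_dens i.
  rewrite /t -tr_r -(povm_hs_sum _ P_complete) (bigD1 al) //= lerDl.
  by apply: sumr_ge0 => be _; apply: t_ge0.
apply: (@le_trans _ _ (\sum_j m%:R^-1 * \sum_i t i (sigma i j) ^+ 2)).
  by apply: ler_sum => j _; apply: prod_le_mean_sqr => // i; [apply: t_ge0 | apply: t_le1].
rewrite -mulr_sumr exchange_big /= ler_wpM2l ?invr_ge0 ?ler0n //.
apply: ler_sum => i _; apply: le_trans (sic_sq_sum_le (d_ge2 i) (P_sic i) (r_dens i)).
exact: sum_inj_le (sigma_inj i) (fun al => exprn_ge0 2 (t_ge0 i al)).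
Qed.

End Operators.

Theorem theorem3 (C : numClosedFieldType) (m : nat) (d : 'I_m -> nat) (rho : op C (mindex d))
  (a : 'I_m -> C) (P : forall i : 'I_m, 'I_(d i ^ 2) -> op C 'I_(d i)) :
  (2 <= m)%N ->
  (forall i, (2 <= d i)%N) ->
  density rho ->
  (forall i, gen_sic (a i) (P i)) ->
  fully_separable rho ->
  forall sigma : forall i : 'I_m, 'I_(dmin d) -> 'I_(d i ^ 2),
    (forall i, injective (sigma i)) ->
    \sum_(j < dmin d) tr (mulop (tensor (fun i => P i (sigma i j))) rho)
      <= m%:R^-1 * \sum_(i < m) (a i * (d i ^ 2)%N%:R + 1) / ((d i)%:R * ((d i)%:R + 1)).
Proof.
move=> m_ge2 d_ge2 _ P_sic [K [p [r [p_ge0 p_sum1 r_dens def_rho]]]] sigma sigma_inj.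
under eq_bigr do rewrite -[tr _]/(hs _ rho) (hs_tensor_separable _ def_rho).
rewrite exchange_big /=; set B := (X in _ <= X).
apply: (@le_trans _ _ (\sum_k p k * B)); last by rewrite -mulr_suml p_sum1 mul1r.
apply: ler_sum => k _; rewrite -mulr_sumr ler_wpM2l //.
exact: sic_product_state_le.
Qed.
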